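(* Let $\langle f,g\rangle$ be a pencil of plane cubics and suppose that $H(g)$ is defined, distinct from $g$, and $H(g)\in\langle f,g\rangle$. Then for any $C\in SL(3)$ such that $H(C\cdot g)\in\langle f,C\cdot g\rangle$, we have $C\cdot\langle f,g\rangle=\langle f,C\cdot g\rangle$.
   Context: Plane cubics up to scalar are points of $\mathbb{P}^9$; $\langle f,g\rangle$ denotes the line (pencil) spanned by $f,g$. $H(g)=\det(\partial^2g/\partial x_i\partial x_j)$ is the Hessian; ''defined'' means not identically zero, and ''distinct from $g$'' means not proportional to $g$. $SL(3)$ acts on cubics by linear change of variables $x,y,z$, and hence on pencils. *)

From HB Require Import structures.
From mathcomp Require Import all_boot all_order all_algebra.
From mathcomp Require Import mpoly.
Set Implicit Arguments. Unset Strict Implicit. Unset Printing Implicit Defensive.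
Import GRing.Theory Num.Theory.
Local Open Scope ring_scope.


Definition is_cubic (R : comRingType) (f : {mpoly R[3]}) : Prop :=
  f \is 3.-homog.

Definition hessian (R : comRingType) (g : {mpoly R[3]}) : {mpoly R[3]} :=
  \det (\matrix_(i < 3, j < 3) mderiv i (mderiv j g)).

(* Linear change of variables: (C . g)(x) = g(C^{-1} x); a left action of SL(3). *)
Definition lin_subst (R : comUnitRingType) (C : 'M[R]_3) : 3.-tuple {mpoly R[3]} :=
  [tuple \sum_(j < 3) (invmx C) i j *: 'X_j | i < 3].

Definition act (R : comUnitRingType) (C : 'M[R]_3) (g : {mpoly R[3]}) : {mpoly R[3]} :=
  g \mPo lin_subst C.

Definition proportional (R : comRingType) (p q : {mpoly R[3]}) : Prop :=
  exists c : R, p = c *: q.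

(* f, g span a pencil (a line in P^9): they are linearly independent. *)
Definition is_pencil (R : comRingType) (f g : {mpoly R[3]}) : Prop :=
  forall a b : R, a *: f + b *: g = 0 -> a = 0 /\ b = 0.

(* The linear span <f,g> (the affine cone over the line in P^9). *)
Definition span2 (R : comRingType) (f g : {mpoly R[3]}) : {mpoly R[3]} -> Prop :=
  fun h => exists a b : R, h = a *: f + b *: g.

Definition act_set (R : comUnitRingType) (C : 'M[R]_3) (S : {mpoly R[3]} -> Prop)
  : {mpoly R[3]} -> Prop :=
  fun h => exists k, S k /\ h = act C k.

(* The Hessian is SL(3)-equivariant: by the chain rule the Hessian matrix of
   x |-> g(A x) is A^T (Hess g)(A x) A, so H(C.g) = C.H(g) when det C = 1.
   Write H(g) = a f + b g and H(C.g) = a' f + b' C.g; neither H(g) nor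
   C.H(g) is proportional to g, resp. C.g, so a and a' are nonzero.  Applying C
   to the first relation and comparing with the second gives
   a C.f = a' f + (b' - b) C.g, hence C.<f,g> = <C.f, C.g> = <f, C.g>. *)

From HB Require Import structures.
From mathcomp Require Import all_boot all_order all_algebra.
From mathcomp Require Import mpoly ring.
Set Implicit Arguments. Unset Strict Implicit. Unset Printing Implicit Defensive.
Import GRing.Theory Num.Theory.
Local Open Scope ring_scope.

Section MPolyCalculus.
Variables (n : nat) (R : comNzRingType).
Implicit Types (p q : {mpoly R[n]}) (A B : 'M[R]_n).

Lemma mpoly_ring_ind (P : {mpoly R[n]} -> Prop) :
  (forall c, P c%:MP) -> (forall i, P 'X_i) ->
  (forall p q, P p -> P q -> P (p + q)) -> (forall p q, P p -> P q -> P (p * q)) ->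
  forall p, P p.
Proof.
move=> PC PX PD PM p; rewrite [p]mpolyE.
have P0 : P 0 by rewrite -mpolyC0.
have P1 : P 1 by rewrite -mpolyC1.
apply: (big_ind P) => // m _; rewrite -mul_mpolyC; apply: (PM) => //.
rewrite mpolyXE_id; apply: (big_ind P) => // i _.
by elim: (m i) => [|e IHe]; rewrite ?expr0 // exprS; apply: (PM).
Qed.

Lemma mderivXU (i j : 'I_n) : mderiv i ('X_j : {mpoly R[n]}) = (i == j)%:R%:MP.
Proof.
rewrite mderivX mnm1E; case: (eqVneq j i) => [->|_]; last by rewrite scale0r mpolyC0.
have -> : (U_(i) - U_(i))%MM = 0%MM by apply/mnmP => l; rewrite mnmBE subnn mnm0E.
by rewrite mpolyX0 scale1r mpolyC1.
Qed.

Lemma mderiv_comp k (lq : n.-tuple {mpoly R[k]}) (l : 'I_k) p :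
  mderiv l (p \mPo lq) = \sum_(i < n) (mderiv i p \mPo lq) * mderiv l (tnth lq i).
Proof.
elim/mpoly_ring_ind: p => [c|j|p q IHp IHq|p q IHp IHq].
- rewrite comp_mpolyC mderivC big1 // => i _.
  by rewrite mderivC comp_mpoly0 mul0r.
- rewrite comp_mpolyXU -tnth_nth (bigD1 j) //= big1 => [|i /negbTE ij].
    by rewrite mderivXU eqxx mpolyC1 comp_mpoly1 mul1r addr0.
  by rewrite mderivXU ij mpolyC0 comp_mpoly0 mul0r.
- rewrite comp_mpolyD mderivD IHp IHq -big_split /=.
  by apply: eq_bigr => i _; rewrite mderivD comp_mpolyD mulrDl.
- rewrite rmorphM /= mderivM IHp IHq mulr_suml mulr_sumr -big_split /=.
  apply: eq_bigr => i _; rewrite mderivM comp_mpolyD !rmorphM /=; ring.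
Qed.

Lemma comp_mpolyA k m (lq : n.-tuple {mpoly R[k]}) (lr : k.-tuple {mpoly R[m]}) p :
  (p \mPo lq) \mPo lr = p \mPo [tuple tnth lq i \mPo lr | i < n].
Proof.
elim/mpoly_ring_ind: p => [c|i|p q IHp IHq|p q IHp IHq].
- by rewrite !comp_mpolyC.
- by rewrite !comp_mpolyXU -!tnth_nth tnth_map tnth_ord_tuple.
- by rewrite !comp_mpolyD IHp IHq.
- by rewrite !rmorphM /= IHp IHq.
Qed.

Definition lin_form A : n.-tuple {mpoly R[n]} :=
  [tuple \sum_(j < n) A i j *: 'X_j | i < n].

Lemma tnth_lin_form A i : tnth (lin_form A) i = \sum_(j < n) A i j *: 'X_j.
Proof. by rewrite tnth_map tnth_ord_tuple. Qed.

Lemma lin_form1 : lin_form 1%:M = [tuple 'X_i | i < n].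
Proof.
apply: eq_from_tnth => i; rewrite tnth_lin_form tnth_map tnth_ord_tuple.
rewrite (bigD1 i) //= big1 => [|j /negbTE ij]; rewrite mxE.
  by rewrite eqxx scale1r addr0.
by rewrite eq_sym ij scale0r.
Qed.

Lemma comp_lin_form A B p :
  (p \mPo lin_form A) \mPo lin_form B = p \mPo lin_form (A *m B).
Proof.
rewrite comp_mpolyA; congr comp_mpoly; apply: eq_from_tnth => i.
rewrite tnth_map tnth_ord_tuple !tnth_lin_form raddf_sum /=.
under eq_bigr => j _ do
  rewrite comp_mpolyZ comp_mpolyXU -tnth_nth tnth_lin_form scaler_sumr.
rewrite exchange_big /=; apply: eq_bigr => l _.
by rewrite mxE scaler_suml; apply: eq_bigr => j _; rewrite scalerA.
Qed.

Lemma mderiv_lin_form A (i k : 'I_n) : mderiv k (tnth (lin_form A) i) = (A i k)%:MP.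
Proof.
rewrite tnth_lin_form raddf_sum /= (bigD1 k) //= big1 => [|j /negbTE kj].
  by rewrite mderivZ mderivXU eqxx mpolyC1 addr0 -mul_mpolyC mulr1.
by rewrite mderivZ mderivXU eq_sym kj mpolyC0 scaler0.
Qed.

Lemma mderiv_comp_lin_form A p (k : 'I_n) :
  mderiv k (p \mPo lin_form A) = \sum_(i < n) (A i k)%:MP * (mderiv i p \mPo lin_form A).
Proof.
by rewrite mderiv_comp; apply: eq_bigr => i _; rewrite mderiv_lin_form mulrC.
Qed.

Definition hessian_mx p : 'M[{mpoly R[n]}]_n :=
  \matrix_(i < n, j < n) mderiv i (mderiv j p).

Lemma hessian_mx_comp_lin_form A p :
  hessian_mx (p \mPo lin_form A) =
  (map_mx (@mpolyC n R) A)^T *m map_mx (comp_mpoly (lin_form A)) (hessian_mx p)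
    *m map_mx (@mpolyC n R) A.
Proof.
apply/matrixP => a b; rewrite !mxE mderiv_comp_lin_form raddf_sum /=.
apply: eq_bigr => j _; rewrite !mxE mulr_suml mderiv_mulC mderiv_comp_lin_form mulr_sumr.
by apply: eq_bigr => i _; rewrite !mxE; ring.
Qed.

End MPolyCalculus.

Section LinearAction.
Variable R : comUnitRingType.
Implicit Types (C : 'M[R]_3) (p q : {mpoly R[3]}).

Lemma actE C p : act C p = p \mPo lin_form (invmx C).
Proof. by []. Qed.

Lemma actD C p q : act C (p + q) = act C p + act C q.
Proof. exact: comp_mpolyD. Qed.

Lemma actZ C c p : act C (c *: p) = c *: act C p.
Proof. exact: comp_mpolyZ. Qed.

Lemma actK C p : C \in unitmx -> act (invmx C) (act C p) = p.
Proof.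
by move=> uC; rewrite !actE comp_lin_form invmxK mulVmx // lin_form1 comp_mpoly_id.
Qed.

Lemma hessianE p : hessian p = \det (hessian_mx p).
Proof. by []. Qed.

Lemma hessian_act C p : hessian (act C p) = (\det (invmx C) ^+ 2) *: act C (hessian p).
Proof.
rewrite !hessianE actE hessian_mx_comp_lin_form.
rewrite !det_mulmx det_tr !det_map_mx -mul_mpolyC rmorphXn /=; ring.
Qed.

Lemma hessian_act_SL C p : \det C = 1 -> hessian (act C p) = act C (hessian p).
Proof. by move=> detC; rewrite hessian_act det_inv detC invr1 expr1n scale1r. Qed.

Lemma act_set_span2 C f g h :
  act_set C (span2 f g) h <-> span2 (act C f) (act C g) h.
Proof.
split=> [[_ [[a [b ->]] ->]]|[a [b ->]]].
  by exists a, b; rewrite actD !actZ.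
by exists (a *: f + b *: g); split; [exists a, b | rewrite actD !actZ].
Qed.

Lemma proportional_act C p q : C \in unitmx ->
  proportional (act C p) (act C q) -> proportional p q.
Proof.
move=> uC [c Cpq]; exists c.
by rewrite -(actK p uC) -(actK q uC) Cpq actZ.
Qed.

End LinearAction.

Section Pencil.
Variable R : fieldType.
Implicit Types (f g h : {mpoly R[3]}).

Lemma nonproportional_coef_neq0 f g h a b :
  h = a *: f + b *: g -> ~ proportional h g -> a != 0.
Proof.
by move=> -> nprop; apply/eqP=> a0; apply: nprop; exists b; rewrite a0 scale0r add0r.
Qed.

Lemma span2_exchange f g c d h :
  c != 0 -> span2 (c *: f + d *: g) g h <-> span2 f g h.
Proof.
move=> c0; split=> [[a [b ->]]|[a [b ->]]].
  by exists (a * c), (a * d + b); rewrite scalerDr !scalerA -addrA -scalerDl.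
exists (a / c), (b - a / c * d).
by rewrite scalerDr !scalerA mulfVK // -addrA -scalerDl [_ * d + _]addrC subrK.
Qed.

End Pencil.

Theorem mainTheorem13 (R : numClosedFieldType) (f g : {mpoly R[3]}) :
  is_cubic f -> is_cubic g -> is_pencil f g ->
  hessian g != 0 ->
  ~ proportional (hessian g) g ->
  span2 f g (hessian g) ->
  forall C : 'M[R]_3, \det C = 1 ->
    span2 f (act C g) (hessian (act C g)) ->
    forall h, act_set C (span2 f g) h <-> span2 f (act C g) h.
Proof.
move=> _ _ _ _ nprop [a0 [b0 Hg]] C detC [a1 [b1 HCg]] h.
have uC : C \in unitmx by rewrite unitmxE detC unitr1.
have a0_neq0 : a0 != 0 := nonproportional_coef_neq0 Hg nprop.
have a1_neq0 : a1 != 0.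
  apply: (nonproportional_coef_neq0 HCg); rewrite hessian_act_SL //.
  by move/(proportional_act uC).
have Cf : act C f = (a0^-1 * a1) *: f + (a0^-1 * (b1 - b0)) *: act C g.
  have a0Cf : a0 *: act C f = a1 *: f + (b1 - b0) *: act C g.
    by rewrite scalerBl addrA -HCg hessian_act_SL // Hg actD !actZ addrK.
  by apply: (scalerI a0_neq0); rewrite a0Cf scalerDr !scalerA !mulrA mulfV // !mul1r.
by rewrite act_set_span2 Cf span2_exchange // mulf_neq0 ?invr_eq0.
Qed.
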